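(* Let $T$ be a linear operator in $H$. If there exist $z\in W_e(T)$ and $w\in\mathbb C\setminus\{0\}$ with $z+w(0,\infty)\subset W(T)$, then $z+w[0,\infty)\subset W_e(T)$.
   Context: $H$ is a separable infinite-dimensional complex Hilbert space; operators need not be closed, closable or densely defined. $W(T)=\{\langle Tx,x\rangle:x\in\operatorname{dom}(T),\|x\|=1\}$, $W_e(T)=\{\lambda:\exists x_n\in\operatorname{dom}(T),\|x_n\|=1,x_n\stackrel{w}{\to}0,\langle Tx_n,x_n\rangle\to\lambda\}$. *)

(* The complex numbers are  R[i]  for  R : realType
   (mathcomp-real-closed's [complex]); a complex Hilbert space is given by
   an  R[i]-module  V  with an inner product  ip  satisfying the axioms below. *)
From mathcomp Require Import all_boot all_order all_algebra.
From mathcomp Require Import reals.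
From mathcomp.real_closed Require Import complex.
Set Implicit Arguments. Unset Strict Implicit. Unset Printing Implicit Defensive.
Import Order.TTheory GRing.Theory Num.Theory.
Local Open Scope ring_scope.

Section Hilbert.
Variables (R : realType) (V : lmodType R[i]) (ip : V -> V -> R[i]).

Definition rC (t : R) : R[i] := Complex t 0.

Definition cvgC (u : nat -> R[i]) (l : R[i]) : Prop :=
  forall e : R, 0 < e -> exists N : nat, forall n : nat, (N <= n)%N ->
    `|u n - l| < rC e.

Definition inner_product_axioms : Prop :=
  [/\ forall (a : R[i]) (x y z : V), ip (a *: x + y) z = a * ip x z + ip y z,
      forall x y : V, ip y x = Num.conj (ip x y),
      forall x : V, 0 <= @complex.Re R (ip x x) &
      forall x : V, ip x x = 0 -> x = 0].

Definition hnorm (x : V) : R := Num.sqrt (@complex.Re R (ip x x)).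

Definition complete : Prop :=
  forall u : nat -> V,
    (forall e : R, 0 < e -> exists N : nat, forall m n : nat,
        (N <= m)%N -> (N <= n)%N -> hnorm (u m - u n) < e) ->
    exists l : V, forall e : R, 0 < e -> exists N : nat, forall n : nat,
        (N <= n)%N -> hnorm (u n - l) < e.

Definition separable : Prop :=
  exists d : nat -> V, forall (x : V) (e : R), 0 < e ->
    exists n : nat, hnorm (x - d n) < e.

Definition infinite_dimensional : Prop :=
  ~ exists s : seq V, forall x : V, exists c : nat -> R[i],
        x = \sum_(i < size s) c i *: s`_i.

Definition sep_inf_hilbert : Prop :=
  [/\ inner_product_axioms, complete, separable & infinite_dimensional].

(* a linear operator  T : dom(T) -> H,  dom(T) a (not necessarily closed or dense)
   linear subspace; the values of T outside its domain are irrelevant *)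
Definition linear_operator (D : V -> Prop) (T : V -> V) : Prop :=
  [/\ D 0,
      forall (a : R[i]) (x y : V), D x -> D y -> D (a *: x + y) &
      forall (a : R[i]) (x y : V), D x -> D y -> T (a *: x + y) = a *: T x + T y].

Definition num_range (D : V -> Prop) (T : V -> V) (l : R[i]) : Prop :=
  exists x : V, [/\ D x, hnorm x = 1 & ip (T x) x = l].

Definition weak_to_0 (u : nat -> V) : Prop :=
  forall y : V, cvgC (fun n => ip (u n) y) 0.

Definition ess_num_range (D : V -> Prop) (T : V -> V) (l : R[i]) : Prop :=
  exists u : nat -> V,
    [/\ forall n, D (u n), forall n, hnorm (u n) = 1, weak_to_0 u &
        cvgC (fun n => ip (T (u n)) (u n)) l].

End Hilbert.

From HB Require Import structures.
From mathcomp Require Import all_boot all_order all_algebra.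
From mathcomp Require Import reals.
From mathcomp.real_closed Require Import complex.
From mathcomp Require Import ring lra.
From Stdlib Require Import IndefiniteDescription.
Set Implicit Arguments. Unset Strict Implicit. Unset Printing Implicit Defensive.
Import Order.TTheory GRing.Theory Num.Theory Normc.
Local Open Scope ring_scope.

(* Take unit vectors [u_n] in dom T, weakly null, with <T u_n, u_n> -> z, and
   fix s > 0.  For t > s pick a unit x with <T x, x> = z + w t and perturb u_n
   to v = b x + u_n.  As <u_n, x> and <u_n, T x> tend to 0 (but <T u_n, x> need
   not: T is unbounded), <T v, v> - (z + w s) <v, v> equals, up to small terms,
     |b|^2 (z + w t) + conj(b) <T u_n, x> + z - (z + w s) (1 + |b|^2).
   Choosing the phase of b so that conj(b) <T u_n, x> = |b| c w with c >= 0, and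
   |b| = r the positive root of (t - s) r^2 + c r = s, this vanishes.  Taking
   t - s = s / δ^2 forces r <= δ, so the normalised vectors v stay weakly close
   to u_n, and a diagonal choice gives a weakly null sequence witnessing
   z + w s in W_e(T). *)

HB.instance Definition _ (R : realType) :=
  GRing.RMorphism.copy (@rC R) (real_complex R).

Lemma exists_quadratic_root (R : rcfType) (k a s d : R) :
  0 < s -> 0 <= d -> s <= k * d ^+ 2 + a * d ->
  exists2 r, 0 < r <= d & k * r ^+ 2 + a * r = s.
Proof.
move=> s0 d0 sd; pose p := k *: 'X^2 + a *: 'X - s%:P.
have pE r : p.[r] = k * r ^+ 2 + a * r - s.
  by rewrite !(hornerD, hornerN, hornerZ, hornerXn, hornerX, hornerC).
have [|r /andP[r0 rd] /rootP] := @poly_ivt _ p 0 d d0.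
  by rewrite !pE expr0n /= !mulr0 add0r sub0r oppr_le0 (ltW s0) subr_ge0.
rewrite pE => /eqP; rewrite subr_eq0 => /eqP prs.
exists r => //; rewrite rd andbT lt_def r0 andbT.
by apply: contraTneq s0 => r_eq0; rewrite -prs r_eq0 expr0n !mulr0 addr0 ltxx.
Qed.

Lemma eventually_invSn_lt (R : archiRealFieldType) (e : R) : 0 < e ->
  exists N, forall n, (N <= n)%N -> n.+1%:R^-1 < e.
Proof.
move=> e0; exists (Num.bound e^-1) => n nN.
rewrite -[e]invrK ltf_pV2 ?posrE ?invr_gt0 ?ltr0Sn //.
apply: lt_le_trans (archi_boundP _) _; first by rewrite invr_ge0 ltW.
by rewrite ler_nat ltnW.
Qed.

Section ComplexFacts.
Variable R : realType.
Implicit Types (a : R) (x c w : R[i]).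

Lemma normr_normc x : `|x| = rC (normc x).
Proof. by case: x => a b; rewrite normc_def. Qed.

Lemma normc_ge0 x : 0 <= normc x.
Proof. by case: x => a b; apply: sqrtr_ge0. Qed.

Lemma normc_conj x : normc x^* = normc x.
Proof. by have := normcJ x; rewrite !normr_normc => -[]. Qed.

Lemma normc_eq1 x : `|x| = 1 -> normc x = 1.
Proof. by rewrite normr_normc => -[]. Qed.

Lemma normc_rC a : normc (rC a) = `|a|.
Proof. by rewrite /normc /= expr0n addr0 sqrtr_sqr. Qed.

Lemma ltc_normc x a : (`|x| < rC a) = (normc x < a).
Proof. by rewrite normr_normc ltcR. Qed.

Lemma conj_rC a : (rC a)^* = rC a.
Proof. by apply: conj_Creal; apply/complex_realP; exists a. Qed.

Lemma exists_aligning_phase c w : w != 0 ->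
  exists2 g, `|g| = 1 & g^* * c = w * rC (normc c / normc w).
Proof.
move=> w0; have [->|c0] := eqVneq c 0.
  by exists 1; rewrite ?normr1 // normc0 mul0r mulr0 rmorph0 mulr0.
have nc0 : `|c| != 0 by rewrite normr_eq0.
have nw0 : `|w| != 0 by rewrite normr_eq0.
exists (c / `|c| * (w / `|w|)^*).
  by rewrite normrM norm_conjC !normrM !normfV !normr_id !divff ?mulr1.
rewrite [rC _]rmorphM fmorphV /= -!normr_normc !rmorphM /= !fmorphV /= conjCK !conj_normC.
have cc : c^* * c = `|c| * `|c| by rewrite -expr2 normCKC.
transitivity (c^* * c / `|c| * (w / `|w|)); first by ring.
by rewrite cc; field; rewrite nc0 nw0.
Qed.

Lemma exists_balancing_scalar c w (s δ : R) : w != 0 -> 0 < s -> 0 < δ ->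
  exists b, exists2 r, 0 < r <= δ &
    [/\ normc b = r, b * b^* = rC (r ^+ 2) & b^* * c = w * rC (s - s / δ ^+ 2 * r ^+ 2)].
Proof.
move=> w0 s0 δ0; set a := normc c / normc w.
have a0 : 0 <= a by rewrite divr_ge0 ?normc_ge0.
have [|r /andP[r0 rδ] hr] := @exists_quadratic_root _ (s / δ ^+ 2) a s δ s0 (ltW δ0).
  by rewrite divfK ?expf_neq0 ?gt_eqF // lerDl mulr_ge0 // ltW.
have [g g1 gc] := exists_aligning_phase c w0.
exists (rC r * g), r; first by rewrite r0.
split.
- by rewrite normcM normc_rC normc_eq1 // mulr1 gtr0_norm.
- by rewrite rmorphM /= conj_rC mulrACA -normCK g1 expr1n mulr1 rmorphXn /= expr2.
- have -> : s - s / δ ^+ 2 * r ^+ 2 = r * a by rewrite -{1}hr; ring.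
  by rewrite rmorphM /= conj_rC -mulrA gc [rC (r * a)]rmorphM /= mulrCA.
Qed.

End ComplexFacts.

Section InnerProduct.
Variables (R : realType) (V : lmodType R[i]) (ip : V -> V -> R[i]).
Hypothesis ipP : inner_product_axioms ip.
Local Notation hnorm := (hnorm ip).

Lemma ipDZl a x y z : ip (a *: x + y) z = a * ip x z + ip y z.
Proof. by case: ipP. Qed.

Lemma ip_conj x y : ip y x = (ip x y)^*.
Proof. by case: ipP. Qed.

Lemma ipDZr a x y z : ip z (a *: x + y) = a^* * ip z x + ip z y.
Proof. by rewrite ip_conj ipDZl rmorphD rmorphM /= -!ip_conj. Qed.

Lemma ipZl a x z : ip (a *: x) z = a * ip x z.
Proof.
have ip0 : ip 0 z = 0 by have := ipDZl (-1) 0 0 z; rewrite scaler0 addr0 mulN1r addNr.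
by rewrite -[a *: x]addr0 ipDZl ip0 addr0.
Qed.

Lemma ipZr a x z : ip z (a *: x) = a^* * ip z x.
Proof. by rewrite ip_conj ipZl rmorphM /= -ip_conj. Qed.

Lemma ip_expand b x u x' u' :
  ip (b *: x + u) (b *: x' + u') =
  b * b^* * ip x x' + b * ip x u' + b^* * ip u x' + ip u u'.
Proof. rewrite !(ipDZl, ipDZr); ring. Qed.

Lemma hnorm_sqr x : hnorm x ^+ 2 = complex.Re (ip x x).
Proof. by rewrite sqr_sqrtr //; case: ipP. Qed.

Lemma ip_self x : ip x x = rC (hnorm x ^+ 2).
Proof. by rewrite hnorm_sqr; apply/esym/RRe_real; rewrite CrealE -ip_conj. Qed.

Lemma hnorm_eq1 x : hnorm x = 1 <-> ip x x = 1.
Proof.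
rewrite ip_self; split=> [-> | /(congr1 (@complex.Re R)) /= hx]; first by rewrite expr1n.
by apply: (pexpIrn (ltn0Sn 1)); rewrite ?nnegrE ?sqrtr_ge0 ?expr1n.
Qed.

Lemma normc_ip_le x y : normc (ip x y) <= (hnorm x ^+ 2 + hnorm y ^+ 2) / 2.
Proof.
have [p p1 pxy] := exists_aligning_phase (ip x y) (oner_neq0 R[i]).
rewrite normc1 divr1 mul1r in pxy.
have pp : p * p^* = 1 by rewrite -normCK p1 expr1n.
have pyx : p * ip y x = rC (normc (ip x y)).
  by rewrite ip_conj -[p]conjCK -rmorphM /= pxy conj_rC.
have := ip_self ((- p) *: y + x); rewrite ip_expand rmorphN /= !ip_self.
rewrite mulrNN pp mul1r !mulNr pyx pxy => h.
have /complexI e : rC (hnorm (- p *: y + x) ^+ 2) =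
    rC (hnorm x ^+ 2 + hnorm y ^+ 2 - normc (ip x y) *+ 2).
  by rewrite -h !(rmorphB, rmorphD, rmorphMn) /=; ring.
have := sqr_ge0 (hnorm (- p *: y + x)); rewrite e; lra.
Qed.

End InnerProduct.

Section EssentialRange.
Variables (R : realType) (V : lmodType R[i]) (ip : V -> V -> R[i]).
Variables (D : V -> Prop) (T : V -> V).
Local Notation hnorm := (hnorm ip).

Definition tail_approx (u : nat -> V) (λ : R[i]) :=
  forall (e : R) (N : nat), 0 < e -> exists v n, [/\ D v, hnorm v = 1, (N <= n)%N,
    normc (ip (T v) v - λ) <= e &
    forall y, normc (ip v y) <= 2 * normc (ip (u n) y) + e * (1 + hnorm y ^+ 2)].

Lemma ess_num_range_of_tail_approx (u : nat -> V) (λ : R[i]) :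
  weak_to_0 ip u -> tail_approx u λ -> ess_num_range ip D T λ.
Proof.
move=> u0 approx.
have /functional_choice[f hf] : forall k : nat, exists vn : V * nat,
    [/\ D vn.1, hnorm vn.1 = 1, (k <= vn.2)%N,
      normc (ip (T vn.1) vn.1 - λ) <= k.+1%:R^-1 &
      forall y, normc (ip vn.1 y)
                  <= 2 * normc (ip (u vn.2) y) + k.+1%:R^-1 * (1 + hnorm y ^+ 2)].
  move=> k; have [|v [n hvn]] := approx k.+1%:R^-1 k; first by rewrite invr_gt0.
  by exists (v, n).
exists (fun k => (f k).1); split.
- by move=> k; case: (hf k).
- by move=> k; case: (hf k).
- move=> y e e0; set Y := 1 + hnorm y ^+ 2.
  have Y0 : 0 < Y by rewrite ltr_pwDl ?sqr_ge0.
  have [N1 hN1] := u0 y (e / 4) (divr_gt0 e0 (ltr0Sn _ 3)).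
  have [N2 hN2] := eventually_invSn_lt (divr_gt0 (divr_gt0 e0 (ltr0Sn _ 1)) Y0).
  exists (maxn N1 N2) => k; rewrite geq_max => /andP[k1 k2].
  have [_ _ kn _ hy] := hf k.
  have uy : normc (ip (u (f k).2) y) < e / 4.
    by rewrite -ltc_normc -[ip _ _]subr0 hN1 // (leq_trans k1 kn).
  have uy2 : 2 * normc (ip (u (f k).2) y) < e / 2 by lra.
  have invY : k.+1%:R^-1 * Y < e / 2 by rewrite -ltr_pdivlMr ?hN2.
  by rewrite subr0 ltc_normc (splitr e); apply: le_lt_trans (hy y) (ltrD uy2 invY).
- move=> e e0; have [N hN] := eventually_invSn_lt e0.
  exists N => k kN; have [_ _ _ hk _] := hf k.
  by rewrite ltc_normc (le_lt_trans hk (hN k kN)).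
Qed.

End EssentialRange.

Section Operator.
Variables (R : realType) (V : lmodType R[i]) (ip : V -> V -> R[i]).
Variables (D : V -> Prop) (T : V -> V).
Hypotheses (ipP : inner_product_axioms ip) (TP : linear_operator D T).
Local Notation hnorm := (hnorm ip).

Lemma domDZ a x y : D x -> D y -> D (a *: x + y).
Proof. by case: TP => _ + _; apply. Qed.

Lemma opDZ a x y : D x -> D y -> T (a *: x + y) = a *: T x + T y.
Proof. by case: TP => _ _; apply. Qed.

Lemma domZ a x : D x -> D (a *: x).
Proof. by move=> Dx; rewrite -[_ *: x]addr0; apply: domDZ => //; case: TP. Qed.

Lemma opZ a x : D x -> T (a *: x) = a *: T x.
Proof.
have D0 : D 0 by case: TP.
have T0 : T 0 = 0.
  by have := opDZ (-1) D0 D0; rewrite scaler0 addr0 scaleN1r addNr.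
by move=> Dx; rewrite -[_ *: x]addr0 opDZ // T0 addr0.
Qed.

Lemma defect_perturbE (z w b : R[i]) (s k r : R) x u :
  D x -> D u -> ip x x = 1 -> ip u u = 1 -> ip (T x) x = z + w * rC (s + k) ->
  b * b^* = rC (r ^+ 2) -> b^* * ip (T u) x = w * rC (s - k * r ^+ 2) ->
  ip (T (b *: x + u)) (b *: x + u) - (z + w * rC s) * ip (b *: x + u) (b *: x + u) =
  (ip (T u) u - z) + b * ip (T x) u - (z + w * rC s) * (b * ip x u + b^* * ip u x).
Proof.
move=> Dx Du xx uu Tx bb bTux.
rewrite opDZ // !(ip_expand ipP) xx uu Tx bb bTux.
by rewrite !(rmorphD, rmorphB, rmorphM) /=; ring.
Qed.

Lemma exists_perturbed_vector (z w : R[i]) (s δ η : R) x u :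
  w != 0 -> 0 < s -> 0 < δ <= 1 -> 0 <= η <= 1 / 4 ->
  D x -> ip x x = 1 -> ip (T x) x = z + w * rC (s + s / δ ^+ 2) ->
  D u -> ip u u = 1 -> normc (ip (T u) u - z) <= η ->
  normc (ip u x) <= η -> normc (ip u (T x)) <= η ->
  exists v, [/\ D v, 1 / 2 <= hnorm v ^+ 2,
    normc (ip (T v) v - (z + w * rC s) * ip v v)
      <= 2 * η * (1 + normc (z + w * rC s)) &
    forall y, normc (ip v y) <= normc (ip u y) + δ * (1 + hnorm y ^+ 2) / 2].
Proof.
move=> w0 s0 /andP[δ0 δ1] /andP[η0 η1] Dx xx Tx Du uu Tuu ux uTx.
have [b [r /andP[r0 rδ] [nb bb bTux]]] := exists_balancing_scalar (ip (T u) x) w0 s0 δ0.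
have r1 : r <= 1 by lra.
set λ := z + w * rC s; set ε := b * ip x u + b^* * ip u x.
have nε : normc ε <= 2 * r * η.
  apply: le_trans (le_normcD _ _) _.
  rewrite (normcM b) (normcM b^*) normc_conj nb (ip_conj ipP) normc_conj; nra.
have εE : ε = rC (hnorm (b *: x + u) ^+ 2 - 1 - r ^+ 2).
  rewrite !rmorphB rmorph1 /= -(ip_self ipP) (ip_expand ipP) xx uu bb /ε; ring.
exists (b *: x + u); split.
- exact: domDZ.
- move: nε; rewrite εE normc_rC ler_norml => /andP[+ _].
  have : r * η <= 1 / 4 by nra.
  have := sqr_ge0 r; lra.
- rewrite (defect_perturbE Dx Du xx uu Tx bb bTux) -/λ -/ε.
  apply: le_trans (le_normcD _ _) _; rewrite normcN.
  apply: le_trans (lerD (le_normcD _ _) (lexx _)) _.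
  rewrite (normcM b) (normcM λ) nb (ip_conj ipP u (T x)) normc_conj.
  have := normc_ge0 (ip u (T x)); have := normc_ge0 λ => hλ huTx.
  have : r * normc (ip u (T x)) <= η by nra.
  have : normc λ * normc ε <= normc λ * (2 * η) by rewrite ler_wpM2l //; nra.
  nra.
- move=> y; rewrite (ipDZl ipP); apply: le_trans (le_normcD _ _) _.
  have hx : hnorm x ^+ 2 = 1 by rewrite (proj2 (hnorm_eq1 ipP x) xx) expr1n.
  have := normc_ip_le ipP x y; rewrite normcM nb hx => hxy.
  have := ler_pM (ltW r0) (normc_ge0 _) rδ hxy; lra.
Qed.

Lemma exists_unit_rescaling (λ : R[i]) v : D v -> 1 / 2 <= hnorm v ^+ 2 ->
  exists v', [/\ D v', hnorm v' = 1,
    normc (ip (T v') v' - λ) <= 2 * normc (ip (T v) v - λ * ip v v) &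
    forall y, normc (ip v' y) <= 2 * normc (ip v y)].
Proof.
move=> Dv hv; set h := hnorm v in hv *.
have h0 : 0 < h.
  have : 0 <= h := sqrtr_ge0 _.
  by rewrite le_eqVlt => /orP[/eqP h0 | //]; move: hv; rewrite -h0 expr0n /=; lra.
set k := h^-1; have kh : k * h = 1 by rewrite mulVf ?gt_eqF.
have k0 : 0 < k by rewrite invr_gt0.
have k2 : k * k <= 2 by nra.
have kkh : rC k * (rC k * ip v v) = 1.
  have e : k * (k * h ^+ 2) = 1 by rewrite mulrA -expr2 -exprMn kh expr1n.
  by rewrite (ip_self ipP) -/h -[RHS]/(rC 1) -e !rmorphM.
exists (rC k *: v); split.
- exact: domZ.
- by apply/(hnorm_eq1 ipP); rewrite (ipZl ipP) (ipZr ipP) conj_rC.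
- rewrite (opZ _ Dv) (ipZl ipP) (ipZr ipP) conj_rC.
  have -> : rC k * (rC k * ip (T v) v) - λ = rC k * rC k * (ip (T v) v - λ * ip v v).
    by rewrite -[X in _ - X]mulr1 -kkh; ring.
  by rewrite !normcM normc_rC gtr0_norm // ler_wpM2r ?normc_ge0.
- move=> y; rewrite (ipZl ipP) normcM normc_rC gtr0_norm // ler_wpM2r ?normc_ge0 //.
  nra.
Qed.

Lemma tail_approx_ray_point (u : nat -> V) (z w : R[i]) (s : R) :
  (forall n, D (u n)) -> (forall n, hnorm (u n) = 1) -> weak_to_0 ip u ->
  cvgC (fun n => ip (T (u n)) (u n)) z -> w != 0 -> 0 < s ->
  (forall t, 0 < t -> num_range ip D T (z + w * rC t)) ->
  tail_approx ip D T u (z + w * rC s).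
Proof.
move=> Du u1 u0 uz w0 s0 ray e N e0.
set δ := Num.min e 1; set A := normc (z + w * rC s).
have δ0 : 0 < δ by rewrite lt_min e0 ltr01.
have [δe δ1] : δ <= e /\ δ <= 1 by rewrite !ge_min !lexx orbT.
have A0 : 0 <= A := normc_ge0 _.
set η := δ / (4 * (1 + A)).
have η0 : 0 < η by rewrite divr_gt0 //; lra.
have A1 : 1 + A != 0 by rewrite gt_eqF //; lra.
have ηA : 4 * η * (1 + A) = δ by rewrite /η; field; rewrite A1.
have η1 : η <= 1 / 4.
  by rewrite /η ler_pdivrMr ?mulr_gt0 //; lra.
have t0 : 0 < s + s / δ ^+ 2 by rewrite ltr_wpDr ?divr_ge0 ?exprn_ge0 // ltW.
have [x [Dx /(hnorm_eq1 ipP) xx Tx]] := ray _ t0.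
have [N1 h1] := uz η η0; have [N2 h2] := u0 x η η0; have [N3 h3] := u0 (T x) η η0.
set n := maxn (maxn N N1) (maxn N2 N3).
have := leqnn n; rewrite {1}/n !geq_max => /andP[/andP[nN n1] /andP[n2 n3]].
have Tuu : normc (ip (T (u n)) (u n) - z) <= η.
  by apply/ltW; rewrite -ltc_normc; apply: h1.
have ux : normc (ip (u n) x) <= η.
  by apply/ltW; rewrite -ltc_normc -[ip _ _]subr0; apply: h2.
have uTx : normc (ip (u n) (T x)) <= η.
  by apply/ltW; rewrite -ltc_normc -[ip _ _]subr0; apply: h3.
have [||v [Dv hv Ev vy]] := exists_perturbed_vector w0 s0 _ _ Dx xx Tx (Du n)
  (proj1 (hnorm_eq1 ipP _) (u1 n)) Tuu ux uTx.
- by rewrite δ0.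
- by rewrite η1 ltW.
have [v' [Dv' v'1 Ev' v'y]] := exists_unit_rescaling (z + w * rC s) Dv hv.
exists v', n; split => //.
- by apply: le_trans Ev' _; move: Ev; rewrite -/A; lra.
- move=> y; apply: le_trans (v'y y) _.
  have Y0 : 0 <= 1 + hnorm y ^+ 2 by rewrite addr_ge0 ?sqr_ge0.
  have := vy y; have := ler_wpM2r Y0 δe; lra.
Qed.

End Operator.

Theorem proposition2p4 (R : realType) (V : lmodType R[i]) (ip : V -> V -> R[i])
    (HV : sep_inf_hilbert ip) (D : V -> Prop) (T : V -> V)
    (HT : linear_operator D T) (z w : R[i]) :
  ess_num_range ip D T z -> w != 0 ->
  (forall t : R, 0 < t -> num_range ip D T (z + w * rC t)) ->
  forall t : R, 0 <= t -> ess_num_range ip D T (z + w * rC t).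
Proof.
case: HV => ipP _ _ _ [u [Du u1 u0 uz]] w0 ray t.
rewrite le_eqVlt => /orP[/eqP <- | t0]; first by rewrite rmorph0 mulr0 addr0; exists u.
apply: (ess_num_range_of_tail_approx u0).
exact: (tail_approx_ray_point ipP HT Du u1 u0 uz w0 t0 ray).
Qed.
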